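(* Let $X\subseteq\mathbb{R}^n$ be nonempty, closed and convex; let $F:X\to\mathbb{R}^n$ be $L_F$-Lipschitz continuous and monotone on $X$; let $H:X\to\mathbb{R}^n$ be $L_H$-Lipschitz continuous and monotone on $X$; and assume the solution set $\mathrm{SOL}(\mathrm{SOL}(X,F),H)$ of the bilevel VI is nonempty. Then: (i) For every $x\in X$, $\mathrm{Gap}(x,\mathrm{SOL}(X,F),H)\ge -B_H\,\mathrm{dist}(x,\mathrm{SOL}(X,F))$. In particular, for every $x\in\mathrm{SOL}(X,F)$, $\mathrm{Gap}(x,\mathrm{SOL}(X,F),H)\ge 0$. (ii) In the special case $H=\nabla f$ with $f$ continuously differentiable and convex, for every $x\in X$ we have $f(x)-f(x^* )\ge -\|\nabla f(x^* )\|\,\mathrm{dist}(x,\mathrm{SOL}(X,F))$, where $x^*$ is an optimal solution of $\min\{f(x): x\in\mathrm{SOL}(X,F)\}$. If moreover $f$ is $\mu$-strongly convex, then for every $x\in X$, $\frac{\mu}{2}\|x-x^*\|^2\le f(x)-f(x^* )+\|\nabla f(x^* )\|\,\mathrm{dist}(x,\mathrm{SOL}(X,F))$, where $x^*$ is the unique optimal solution of that problem. (iii) If $\mathrm{VI}(X,F)$ is $\alpha$-weakly sharp of order $\mathcal{M}\ge1$, then for every $x\in X$, $\mathrm{dist}(x,\mathrm{SOL}(X,F))\le \sqrt[\mathcal{M}]{\alpha^{-1}\mathrm{Gap}(x,X,F)}$.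
   Context: For a closed convex set $Y$ and a map $G:Y\to\mathbb{R}^n$, $\mathrm{SOL}(Y,G)=\{x\in Y: G(x)^\top(y-x)\ge0\ \forall y\in Y\}$. The bilevel VI asks to find $x\in\mathrm{SOL}(\mathrm{SOL}(X,F),H)$. The dual gap function is $\mathrm{Gap}(x,Y,G)=\sup_{y\in Y}G(y)^\top(x-y)$ for any $x\in\mathbb{R}^n$ (extended-valued). $\mathrm{dist}(x,Y)=\|x-\Pi_Y[x]\|$ with $\Pi_Y$ the Euclidean projection, $\|\cdot\|$ the Euclidean norm. $B_H=\sup_{x\in\mathrm{SOL}(X,F)}\|H(x)\|$. $\mathrm{VI}(X,F)$ is $\alpha$-weakly sharp of order $\mathcal{M}$ if there are $\alpha>0$, $\mathcal{M}\ge1$ with $F(x^* )^\top(x-x^* )\ge\alpha\,\mathrm{dist}^{\mathcal{M}}(x,\mathrm{SOL}(X,F))$ for all $x\in X$ and all $x^*\in\mathrm{SOL}(X,F)$. *)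

From HB Require Import structures.
From mathcomp Require Import all_boot all_order all_algebra.
From mathcomp Require Import all_classical all_reals all_analysis.
Set Implicit Arguments. Unset Strict Implicit. Unset Printing Implicit Defensive.
Import Order.TTheory GRing.Theory Num.Theory.
Import numFieldNormedType.Exports.
Local Open Scope classical_set_scope.
Local Open Scope ring_scope.

Definition dot {R : realType} {n : nat} (u v : 'rV[R]_n) : R :=
  \sum_(i < n) u ord0 i * v ord0 i.

Definition enorm {R : realType} {n : nat} (u : 'rV[R]_n) : R :=
  Num.sqrt (dot u u).

Definition Convex_setE {R : realType} {n : nat} (Y : set 'rV[R]_n) : Prop :=
  forall x y (t : R), Y x -> Y y -> 0 <= t <= 1 -> Y (t *: x + (1 - t) *: y).

Definition SOL {R : realType} {n : nat} (Y : set 'rV[R]_n)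
  (G : 'rV[R]_n -> 'rV[R]_n) : set 'rV[R]_n :=
  [set x | Y x /\ forall y, Y y -> 0 <= dot (G x) (y - x)].

Definition Gap {R : realType} {n : nat} (x : 'rV[R]_n) (Y : set 'rV[R]_n)
  (G : 'rV[R]_n -> 'rV[R]_n) : \bar R :=
  ereal_sup [set (dot (G y) (x - y))%:E | y in Y].

(* Euclidean distance to a set: dist(x,Y) = inf_{y in Y} ||x - y||
   (equal to ||x - Pi_Y[x]|| for Y nonempty closed convex) *)
Definition dist {R : realType} {n : nat} (x : 'rV[R]_n) (Y : set 'rV[R]_n) : R :=
  inf [set enorm (x - y) | y in Y].

Definition B_H {R : realType} {n : nat} (X : set 'rV[R]_n)
  (F H : 'rV[R]_n -> 'rV[R]_n) : \bar R :=
  ereal_sup [set (enorm (H x))%:E | x in SOL X F].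

Definition Lipschitz_onE {R : realType} {n : nat} (X : set 'rV[R]_n)
  (G : 'rV[R]_n -> 'rV[R]_n) (L : R) : Prop :=
  forall x y, X x -> X y -> enorm (G x - G y) <= L * enorm (x - y).

Definition Monotone_onE {R : realType} {n : nat} (X : set 'rV[R]_n)
  (G : 'rV[R]_n -> 'rV[R]_n) : Prop :=
  forall x y, X x -> X y -> 0 <= dot (G x - G y) (x - y).

Definition convex_fun {R : realType} {n : nat} (f : 'rV[R]_n -> R) : Prop :=
  forall x y (t : R), 0 <= t <= 1 ->
    f (t *: x + (1 - t) *: y) <= t * f x + (1 - t) * f y.

Definition strongly_convex_fun {R : realType} {n : nat} (mu : R)
  (f : 'rV[R]_n -> R) : Prop :=
  0 < mu /\ forall x y (t : R), 0 <= t <= 1 ->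
    f (t *: x + (1 - t) *: y)
      <= t * f x + (1 - t) * f y - mu / 2 * t * (1 - t) * enorm (x - y) ^+ 2.

Definition is_gradient {R : realType} {n : nat} (f : 'rV[R]_n -> R)
  (H : 'rV[R]_n -> 'rV[R]_n) : Prop :=
  forall x, differentiable f x /\ forall v, 'd f x v = dot (H x) v.

Definition argmin_on {R : realType} {n : nat} (f : 'rV[R]_n -> R)
  (Y : set 'rV[R]_n) (xs : 'rV[R]_n) : Prop :=
  Y xs /\ forall y, Y y -> f xs <= f y.

Definition weakly_sharp {R : realType} {n : nat} (X : set 'rV[R]_n)
  (F : 'rV[R]_n -> 'rV[R]_n) (alpha M : R) : Prop :=
  0 < alpha /\ 1 <= M /\
  forall x xs, X x -> SOL X F xs ->
    alpha * dist x (SOL X F) `^ M <= dot (F xs) (x - xs).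

From HB Require Import structures.
From mathcomp Require Import all_boot all_order all_algebra.
From mathcomp Require Import all_classical all_reals all_analysis.
From mathcomp Require Import ring lra.
Import Order.TTheory GRing.Theory Num.Theory.
Import numFieldNormedType.Exports.
Local Open Scope classical_set_scope.
Local Open Scope ring_scope.

(* Write S = SOL(X,F). By Minty's lemma, for monotone Lipschitz F on convex X,
   S = {x in X | <F w, w - x> >= 0 for all w in X}, an intersection of X with closed
   half-spaces; so S is closed and convex.
   (i) For y in S, Gap(x,S,H) >= <H y, x - y> >= -|H y| |x - y| >= -B_H |x - y|; take
   the infimum over y.
   (ii) At a minimiser x* of f over S, the gradient inequality
   f x - f x* >= <grad f x*, x - x*> + m |x - x*|^2 (m = 0, resp. mu/2) and first-order
   optimality <grad f x*, y - x*> >= 0 on S give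
   f x - f x* >= <grad f x*, x - y> + m |x - x*|^2 for every y in S; again take the
   infimum. A minimiser exists in the strongly convex case because the sublevel sets of
   f in S are closed and bounded.
   (iii) Weak sharpness bounds alpha dist(x,S)^M by <F x*, x - x*> <= Gap(x,X,F). *)

Section InnerProduct.
Context {R : realType} {n : nat}.
Implicit Types (u v w : 'rV[R]_n) (a : R).

Lemma dotC u v : dot u v = dot v u.
Proof. by apply: eq_bigr => i _; rewrite mulrC. Qed.

Lemma dotDl u v w : dot (u + v) w = dot u w + dot v w.
Proof. by rewrite /dot -big_split; apply: eq_bigr => i _; rewrite mxE mulrDl. Qed.

Lemma dotZl a u v : dot (a *: u) v = a * dot u v.
Proof. by rewrite /dot mulr_sumr; apply: eq_bigr => i _; rewrite mxE mulrA. Qed.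

Lemma dotDr u v w : dot u (v + w) = dot u v + dot u w.
Proof. by rewrite dotC dotDl !(dotC u). Qed.

Lemma dotZr a u v : dot u (a *: v) = a * dot u v.
Proof. by rewrite dotC dotZl dotC. Qed.

Lemma dotNl u v : dot (- u) v = - dot u v.
Proof. by rewrite -scaleN1r dotZl mulN1r. Qed.

Lemma dotNr u v : dot u (- v) = - dot u v.
Proof. by rewrite -scaleN1r dotZr mulN1r. Qed.

Lemma dotBl u v w : dot (u - v) w = dot u w - dot v w.
Proof. by rewrite dotDl dotNl. Qed.

Lemma dotBr u v w : dot u (v - w) = dot u v - dot u w.
Proof. by rewrite dotDr dotNr. Qed.

Lemma dot0r u : dot u 0 = 0.
Proof. by rewrite -(scale0r (0 : 'rV[R]_n)) dotZr mul0r. Qed.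

Lemma dotxx_ge0 u : 0 <= dot u u.
Proof. by apply: sumr_ge0 => i _; rewrite -expr2 sqr_ge0. Qed.

Lemma dotxx_eq0 u : (dot u u == 0) = (u == 0).
Proof.
apply/idP/eqP => [|->]; last by rewrite dot0r.
rewrite psumr_eq0 => [/allP u0|i _]; last by rewrite -expr2 sqr_ge0.
apply/rowP => i; rewrite mxE; apply/eqP.
by rewrite -sqrf_eq0 expr2 (eqP (u0 i _)) ?mem_index_enum.
Qed.

Lemma enorm_ge0 u : 0 <= enorm u.
Proof. exact: sqrtr_ge0. Qed.

Lemma enorm_sqr u : enorm u ^+ 2 = dot u u.
Proof. by rewrite sqr_sqrtr // dotxx_ge0. Qed.

Lemma enorm_eq0 u : (enorm u == 0) = (u == 0).
Proof. by rewrite sqrtr_eq0 -dotxx_eq0 eq_le dotxx_ge0 andbT. Qed.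

Lemma enormN u : enorm (- u) = enorm u.
Proof. by rewrite /enorm dotNl dotNr opprK. Qed.

Lemma enormB u v : enorm (u - v) = enorm (v - u).
Proof. by rewrite -enormN opprB. Qed.

Lemma enormZ a u : enorm (a *: u) = `|a| * enorm u.
Proof. by rewrite /enorm dotZl dotZr mulrA sqrtrM ?sqr_ge0 // -expr2 sqrtr_sqr. Qed.

Lemma cauchy_schwarz u v : dot u v <= enorm u * enorm v.
Proof.
have [->|u0] := eqVneq u 0; first by rewrite dotC dot0r /enorm dot0r sqrtr0 mul0r.
have [->|v0] := eqVneq v 0; first by rewrite dot0r /enorm dot0r sqrtr0 mulr0.
have pos_uv : 0 < enorm u * enorm v.
  by rewrite mulr_gt0 // lt0r enorm_eq0 ?u0 ?v0 enorm_ge0.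
have := dotxx_ge0 (enorm v *: u - enorm u *: v).
rewrite !(dotBl, dotBr, dotZl, dotZr) -!enorm_sqr (dotC v u) => sq_ge0.
rewrite -subr_ge0 -(pmulr_rge0 _ pos_uv); lra.
Qed.

Lemma cauchy_schwarzN u v : - (enorm u * enorm v) <= dot u v.
Proof. by rewrite lerNl -dotNl -(enormN u) cauchy_schwarz. Qed.

Lemma enormD u v : enorm (u + v) <= enorm u + enorm v.
Proof.
rewrite -ler_sqr ?nnegrE ?addr_ge0 ?enorm_ge0 //.
rewrite enorm_sqr sqrrD !enorm_sqr dotDl !dotDr (dotC v u).
by have := cauchy_schwarz u v; lra.
Qed.

End InnerProduct.

Section EuclideanTopology.
Context {R : realType} {n : nat}.
Implicit Types (u x z : 'rV[R]_n) (S : set 'rV[R]_n).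

Lemma coord_le_enorm u i : `|u ord0 i| <= enorm u.
Proof.
rewrite -(sqrtr_sqr (u ord0 i)) ler_sqrt ?dotxx_ge0 //.
rewrite /dot (bigD1 i) //= -expr2 lerDl; apply: sumr_ge0 => j _.
by rewrite -expr2 sqr_ge0.
Qed.

Lemma mx_norm_le_enorm u : `|u| <= enorm u.
Proof.
rewrite [leLHS]/Num.norm /= mx_normrE; apply: bigmax_le => [|[i j] _ /=].
  exact: enorm_ge0.
by rewrite [i](ord1 i) coord_le_enorm.
Qed.

Lemma enorm_le_mx_norm u : enorm u <= n.+1%:R * `|u|.
Proof.
have coord_le_norm i : `|u ord0 i| <= `|u|.
  rewrite [leRHS]/Num.norm /= mx_normrE.
  by apply/bigmax_geP; right; exists (ord0, i).
rewrite -ler_sqr ?nnegrE ?enorm_ge0 ?mulr_ge0 // enorm_sqr /dot.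
apply: (@le_trans _ _ (\sum_(i < n) `|u|^+2)).
  apply: ler_sum => i _; rewrite -expr2 -real_normK ?num_real //.
  by rewrite lerXn2r ?nnegrE.
rewrite sumr_const card_ord -[_ *+ n]mulr_natl exprMn.
apply: ler_wpM2r; first exact: sqr_ge0.
by rewrite -natrX ler_nat (leq_trans (leqnSn n)) // expnS expn1 leq_pmulr.
Qed.

Lemma closure_enormP S x :
  closure S x <-> forall e, 0 < e -> exists2 z, S z & enorm (x - z) < e.
Proof.
split=> [clSx e e0 | near_x B /nbhs_ballP [r /= r0 rB]].
  have [|z [Sz]] := clSx (ball x (e / n.+1%:R)); first exact/nbhsx_ballx/divr_gt0.
  rewrite mx_norm_ball /ball_ /= ltr_pdivlMr // => xz.
  by exists z => //; rewrite (le_lt_trans (enorm_le_mx_norm _)) // mulrC.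
have [z Sz xz] := near_x r r0; exists z; split => //; apply: rB.
by rewrite mx_norm_ball /ball_ /= (le_lt_trans (mx_norm_le_enorm _)).
Qed.

Lemma dist_ge0 S x : 0 <= dist x S.
Proof.
have [->|/set0P [y Sy]] := eqVneq S set0; first by rewrite /dist image_set0 inf0.
by apply: lb_le_inf => [|_ [z _ <-]]; [exists (enorm (x - y)), y | exact: enorm_ge0].
Qed.

Lemma dist_lt S x e : S !=set0 -> dist x S < e -> exists2 z, S z & enorm (x - z) < e.
Proof.
move=> [y Sy] /inf_lt [|_ [z Sz <-] xz]; first by exists (enorm (x - y)), y.
by exists z.
Qed.

Lemma ler_mul_dist S x (c A : R) : S !=set0 -> 0 <= A ->
  (forall z, S z -> c <= A * enorm (x - z)) -> c <= A * dist x S.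
Proof.
move=> [y Sy]; rewrite le_eqVlt => /predU1P [<- /(_ y Sy)|A0 le_c].
  by rewrite !mul0r.
rewrite -ler_pdivrMl //; apply: lb_le_inf => [|_ [z Sz <-]].
  by exists (enorm (x - y)), y.
by rewrite ler_pdivrMl // le_c.
Qed.

Lemma dist_eq0_closed {S x} : closed S -> S !=set0 -> dist x S = 0 -> S x.
Proof.
move=> clS S0 dx0; apply: clS; apply/closure_enormP => e e0.
by apply: dist_lt; rewrite // dx0.
Qed.

End EuclideanTopology.

Lemma ge0_of_forall_ge_Nmul (R : realType) (a A : R) :
  (forall s, 0 < s <= 1 -> - (A * s) <= a) -> 0 <= a.
Proof.
move=> lb; apply/ler_addgt0Pr => e e0.
set s := Num.min 1 (e / (`|A| + 1)).
have A1 : 0 < `|A| + 1 by rewrite ltr_wpDl.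
have s0 : 0 < s by rewrite lt_min ltr01 divr_gt0.
have s1 : s <= 1 by rewrite ge_min lexx.
have se : s * (`|A| + 1) <= e by rewrite -ler_pdivlMr // ge_min lexx orbT.
have As : A * s <= `|A| * s by rewrite ler_wpM2r ?ler_norm // ltW.
by have := lb s; rewrite s0 s1 => /(_ isT); nra.
Qed.

Definition minty_set {R : realType} {n : nat} (X : set 'rV[R]_n)
    (F : 'rV[R]_n -> 'rV[R]_n) :=
  [set x | X x /\ forall w, X w -> 0 <= dot (F w) (w - x)].

Section MintyVI.
Context {R : realType} {n : nat} {X : set 'rV[R]_n} {F : 'rV[R]_n -> 'rV[R]_n}.

Lemma SOL_sub_minty : Monotone_onE X F -> SOL X F `<=` minty_set X F.
Proof.
move=> monF x [Xx solx]; split=> // w Xw.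
have -> : dot (F w) (w - x) = dot (F w - F x) (w - x) + dot (F x) (w - x).
  by rewrite dotBl subrK.
by rewrite addr_ge0 ?monF ?solx.
Qed.

Lemma minty_sub_SOL {LF : R} : Convex_setE X -> Lipschitz_onE X F LF ->
  minty_set X F `<=` SOL X F.
Proof.
move=> cvxX lipF x [Xx mintyx]; split=> // y Xy.
apply: (@ge0_of_forall_ge_Nmul _ _ (LF * enorm (y - x) ^+ 2)) => s /andP [s0 s1].
set w := s *: y + (1 - s) *: x.
have Xw : X w by apply: cvxX => //; rewrite ltW.
have wx : w - x = s *: (y - x) by apply/rowP => i; rewrite !mxE; ring.
have Fw_ge0 : 0 <= dot (F w) (y - x).
  by move: (mintyx w Xw); rewrite wx dotZr pmulr_rge0.
have lip := lipF w x Xw Xx; rewrite wx enormZ gtr0_norm // in lip.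
have := cauchy_schwarz (F w - F x) (y - x); rewrite dotBl.
have := enorm_ge0 (y - x); nra.
Qed.

Lemma minty_closed : closed X -> closed (minty_set X F).
Proof.
move=> clX x clx; have Xx : X x.
  by apply: clX; apply: closureS clx => z [].
split=> // w Xw; apply: (@ge0_of_forall_ge_Nmul _ _ (enorm (F w))) => s /andP [s0 _].
have [z [_ mintyz] xz] := (closure_enormP _ _).1 clx s s0.
have -> : w - x = (w - z) + (z - x) by rewrite addrA subrK.
rewrite dotDr -[leLHS]add0r lerD ?mintyz //.
apply: le_trans (cauchy_schwarzN _ _).
by rewrite lerN2 ler_wpM2l ?enorm_ge0 // enormB ltW.
Qed.

Lemma minty_convex : Convex_setE X -> Convex_setE (minty_set X F).
Proof.
move=> cvxX x1 x2 t [X1 minty1] [X2 minty2] /andP [t0 t1].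
split=> [|w Xw]; first by apply: cvxX; rewrite ?t0.
have -> : w - (t *: x1 + (1 - t) *: x2) = t *: (w - x1) + (1 - t) *: (w - x2).
  by apply/rowP => i; rewrite !mxE; ring.
by rewrite dotDr !dotZr addr_ge0 // mulr_ge0 ?minty1 ?minty2 ?subr_ge0.
Qed.

Lemma SOL_minty {LF : R} : Convex_setE X -> Lipschitz_onE X F LF -> Monotone_onE X F ->
  SOL X F = minty_set X F.
Proof.
move=> cvxX lipF monF; apply/seteqP; split; first exact: SOL_sub_minty.
exact: minty_sub_SOL cvxX lipF.
Qed.

Lemma SOL_closed {LF : R} : closed X -> Convex_setE X -> Lipschitz_onE X F LF ->
  Monotone_onE X F -> closed (SOL X F).
Proof.
by move=> clX cvxX lipF monF; rewrite (SOL_minty cvxX lipF monF); exact: minty_closed.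
Qed.

Lemma SOL_convex {LF : R} : Convex_setE X -> Lipschitz_onE X F LF ->
  Monotone_onE X F -> Convex_setE (SOL X F).
Proof. by move=> cvxX lipF monF; rewrite (SOL_minty cvxX lipF monF); exact: minty_convex. Qed.

End MintyVI.

Lemma near_right0_itv01 (R : realType) : \forall t \near (0 : R)^'+, 0 < t <= 1.
Proof.
near=> t; apply/andP; split; near: t; first exact: nbhs_right_gt.
exact/nbhs_right_le/ltr01.
Unshelve. all: end_near.
Qed.

Definition convex_with_modulus {R : realType} {n : nat} (m : R) (f : 'rV[R]_n -> R) :=
  forall x y (t : R), 0 <= t <= 1 ->
    f (t *: x + (1 - t) *: y)
      <= t * f x + (1 - t) * f y - m * t * (1 - t) * enorm (x - y) ^+ 2.

Section Gradient.
Context {R : realType} {n : nat} {f : 'rV[R]_n -> R} {H : 'rV[R]_n -> 'rV[R]_n}.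
Implicit Types (a v x y : 'rV[R]_n) (S : set 'rV[R]_n).

Lemma convex_fun_modulus0 : convex_fun f -> convex_with_modulus 0 f.
Proof. by move=> cvxf x y t t01; rewrite !mul0r subr0 cvxf. Qed.

Lemma strongly_convex_modulus {mu : R} :
  strongly_convex_fun mu f -> convex_with_modulus (mu / 2) f.
Proof. by case. Qed.

Lemma diff_quotient_cvg a v : differentiable f a ->
  t^-1 * (f (t *: v + a) - f a) @[t --> 0^'+] --> 'd f a v.
Proof.
move=> df; rewrite -deriveE //.
exact: cvg_dnbhs_at_right (@diff_derivable _ _ _ f a v df).
Qed.

Lemma diff_le_of_quotient_le a v (c k : R) : differentiable f a ->
  (forall t, 0 < t <= 1 -> t^-1 * (f (t *: v + a) - f a) <= c + k * t) ->
  'd f a v <= c.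
Proof.
move=> df le_q.
have lin_cvg : c + k * t @[t --> (0 : R)^'+] --> c.
  apply: cvg_at_right_filter.
  suff : c + k * t @[t --> (0 : R)] --> c + k * 0 by rewrite mulr0 addr0.
  by apply: cvgD; [exact: cvg_cst | apply: cvgM; [exact: cvg_cst | exact: cvg_id]].
apply: ler_cvg_to (diff_quotient_cvg _ v df) lin_cvg _.
exact: filterS le_q (near_right0_itv01 R).
Qed.

Lemma diff_ge_of_quotient_ge a v (c : R) : differentiable f a ->
  (forall t, 0 < t <= 1 -> c <= t^-1 * (f (t *: v + a) - f a)) ->
  c <= 'd f a v.
Proof.
move=> df ge_q; apply: ler_cvg_to (cvg_cst c) (diff_quotient_cvg _ v df) _.
exact: filterS ge_q (near_right0_itv01 R).
Qed.

Lemma segment_shift (x a : 'rV[R]_n) (t : R) : t *: (x - a) + a = t *: x + (1 - t) *: a.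
Proof. by apply/rowP => i; rewrite !mxE; ring. Qed.

Hypothesis gradf : is_gradient f H.

Lemma gradient_ineq {m : R} a x : convex_with_modulus m f ->
  dot (H a) (x - a) <= f x - f a - m * enorm (x - a) ^+ 2.
Proof.
move=> cvxf; have [dfa <-] := gradf a.
apply: (diff_le_of_quotient_le _ _ _ (m * enorm (x - a) ^+ 2)) => // t /andP [t0 t1].
rewrite segment_shift ler_pdivrMl //.
have := cvxf x a t; rewrite ltW // t1 => /(_ isT); lra.
Qed.

Lemma argmin_first_order {S xs y} : Convex_setE S -> argmin_on f S xs -> S y ->
  0 <= dot (H xs) (y - xs).
Proof.
move=> cvxS [Sxs minf] Sy; have [dfxs <-] := gradf xs.
apply: diff_ge_of_quotient_ge => // t /andP [t0 t1].
rewrite segment_shift; apply: mulr_ge0; first by rewrite invr_ge0 ltW.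
by rewrite subr_ge0; apply/minf/cvxS => //; rewrite ltW.
Qed.

Lemma argmin_growth {m S xs} x : convex_with_modulus m f -> Convex_setE S ->
  argmin_on f S xs -> m * enorm (x - xs) ^+ 2 <= f x - f xs + enorm (H xs) * dist x S.
Proof.
move=> cvxf cvxS minxs.
suff : - dot (H xs) (x - xs) <= enorm (H xs) * dist x S.
  by have := gradient_ineq xs x cvxf; lra.
apply: ler_mul_dist; [by exists xs; case: minxs | exact: enorm_ge0 | move=> y Sy].
have -> : dot (H xs) (x - xs) = dot (H xs) (x - y) + dot (H xs) (y - xs).
  by rewrite -dotDr addrA subrK.
have := argmin_first_order cvxS minxs Sy; have := cauchy_schwarzN (H xs) (x - y).
lra.
Qed.

Lemma sublevel_enorm_le {m : R} a y : 0 < m -> convex_with_modulus m f ->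
  f y <= f a -> enorm (y - a) <= enorm (H a) / m.
Proof.
move=> m0 cvxf fya; rewrite ler_pdivlMr //.
have := enorm_ge0 (y - a); rewrite le_eqVlt => /predU1P [<-|ya0].
  by rewrite mul0r enorm_ge0.
rewrite -(ler_pM2l ya0).
have := gradient_ineq a y cvxf; have := cauchy_schwarzN (H a) (y - a).
rewrite expr2; nra.
Qed.

Lemma argmin_exists {m : R} S : closed S -> S !=set0 -> 0 < m ->
  convex_with_modulus m f -> exists xs, argmin_on f S xs.
Proof.
move=> clS [a Sa] m0 cvxf.
have contf : continuous f by move=> x; exact: differentiable_continuous (gradf x).1.
pose K := S `&` f @^-1` [set r | r <= f a].
have Ka : K a by split => /=.
have clK : closed K.
  apply: closedI => //; apply: preimage_closed; last exact: closed_le.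
  by move=> y _; exact: contf.
have bndK : bounded_set K.
  exists (enorm (H a) / m + enorm a); split; first by rewrite num_real.
  move=> M ltM y [_ fya]; apply: le_trans (ltW ltM).
  apply: le_trans (mx_norm_le_enorm y) _.
  rewrite -[y](subrK a); apply: le_trans (enormD _ _) _.
  by rewrite lerD2r sublevel_enorm_le.
have [xs Kxs minK] := compact_EVT_min (ex_intro _ a Ka)
  (bounded_closed_compact bndK clK) (continuous_subspaceT contf).
rewrite inE in Kxs; case: Kxs => Sxs fxs; exists xs; split=> // y Sy.
have [fya|/ltW] := leP (f y) (f a); last exact: le_trans.
by apply: minK; rewrite inE.
Qed.

End Gradient.

Section GapFunction.
Context {R : realType} {n : nat}.
Implicit Types (Y : set 'rV[R]_n) (G : 'rV[R]_n -> 'rV[R]_n) (x y : 'rV[R]_n).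

Lemma Gap_ge_dot {Y} G x {y} : Y y -> ((dot (G y) (x - y))%:E <= Gap x Y G)%E.
Proof. by move=> Yy; apply: ereal_sup_ubound; exists y. Qed.

Lemma Gap_ge0 Y G x : Y x -> (0 <= Gap x Y G)%E.
Proof. by move=> Yx; apply: le_trans (Gap_ge_dot G x Yx); rewrite subrr dot0r. Qed.

Lemma Gap_ge_Nmul_dist Y G x (b : R) : Y !=set0 -> 0 <= b ->
  (forall y, Y y -> enorm (G y) <= b) -> ((- (b * dist x Y))%:E <= Gap x Y G)%E.
Proof.
move=> [y0 Yy0] b0 Gb.
case: (Gap x Y G) (@Gap_ge_dot Y G x) => [g| |] Gap_ge; last 2 first.
- exact: leey.
- by have := Gap_ge y0 Yy0.
rewrite lee_fin lerNl; apply: ler_mul_dist => // [|y Yy]; first by exists y0.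
have := Gap_ge y Yy; rewrite lee_fin.
have := cauchy_schwarzN (G y) (x - y).
have : enorm (G y) * enorm (x - y) <= b * enorm (x - y) by rewrite ler_wpM2r ?enorm_ge0 ?Gb.
lra.
Qed.

Lemma Gap_ge_Nsup_mul_dist Y G x : closed Y -> Y !=set0 ->
  (- (ereal_sup [set (enorm (G y))%:E | y in Y] * (dist x Y)%:E) <= Gap x Y G)%E.
Proof.
move=> clY [y0 Yy0].
have sup_ge y : Y y -> ((enorm (G y))%:E <= ereal_sup [set (enorm (G y))%:E | y in Y])%E.
  by move=> Yy; apply: ereal_sup_ubound; exists y.
case: (ereal_sup _) sup_ge => [b| |] sup_ge; last by have := sup_ge y0 Yy0.
  rewrite -EFinM -EFinN; apply: Gap_ge_Nmul_dist; first by exists y0.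
    by apply: le_trans (enorm_ge0 (G y0)) _; rewrite -lee_fin sup_ge.
  by move=> y Yy; rewrite -lee_fin sup_ge.
(* As [+oo * 0 = 0] in [\bar R], the case [dist x Y = 0] asks for [0 <= Gap x Y G]. *)
have := dist_ge0 Y x; rewrite le_eqVlt => /predU1P [dx0|dx_gt0].
  rewrite -dx0 mule0 oppe0 Gap_ge0 //.
  by apply: dist_eq0_closed clY _ (esym dx0); exists y0.
by rewrite gt0_mulye ?lte_fin // leNye.
Qed.

End GapFunction.

Lemma le_powR_inv (R : realType) (a b M : R) : 0 <= a -> 0 < M ->
  a `^ M <= b -> a <= b `^ M^-1.
Proof.
move=> a0 M0 aMb; rewrite -[a](powRr1 a0) -(mulfV (lt0r_neq0 M0)) powRrM.
apply: ge0_ler_powR => //; first by rewrite invr_ge0 ltW.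
  by rewrite nnegrE powR_ge0.
by rewrite nnegrE (le_trans (powR_ge0 _ _) aMb).
Qed.

Lemma weakly_sharp_dist_le (R : realType) (n : nat) (X : set 'rV[R]_n)
    (F : 'rV[R]_n -> 'rV[R]_n) alpha M x g :
  weakly_sharp X F alpha M -> SOL X F !=set0 -> X x -> Gap x X F = g%:E ->
  dist x (SOL X F) <= (alpha^-1 * g) `^ M^-1.
Proof.
move=> [alpha0 [M1 sharp]] [xs solxs] Xx Gapx.
apply: le_powR_inv; [exact: dist_ge0 | by apply: lt_le_trans M1 | ].
rewrite ler_pdivlMl //; apply: le_trans (sharp x xs Xx solxs) _.
by rewrite -lee_fin -Gapx Gap_ge_dot //; case: solxs.
Qed.

Theorem lemma3p2 (R : realType) (n : nat) (X : set 'rV[R]_n)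
  (F H : 'rV[R]_n -> 'rV[R]_n) (LF LH : R) :
  X !=set0 -> closed X -> Convex_setE X ->
  Lipschitz_onE X F LF -> Monotone_onE X F ->
  Lipschitz_onE X H LH -> Monotone_onE X H ->
  SOL (SOL X F) H !=set0 ->
  (* (i) *)
  ((forall x, X x ->
      (- (B_H X F H * (dist x (SOL X F))%:E) <= Gap x (SOL X F) H)%E) /\
   (forall x, SOL X F x -> (0 <= Gap x (SOL X F) H)%E)) /\
  (* (ii) *)
  (forall f : 'rV[R]_n -> R,
     is_gradient f H -> continuous H -> convex_fun f ->
     (forall xs x, argmin_on f (SOL X F) xs -> X x ->
        - (enorm (H xs) * dist x (SOL X F)) <= f x - f xs) /\
     (forall mu, strongly_convex_fun mu f ->
        (exists xs, argmin_on f (SOL X F) xs) /\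
        (forall xs x, argmin_on f (SOL X F) xs -> X x ->
           mu / 2 * enorm (x - xs) ^+ 2
             <= f x - f xs + enorm (H xs) * dist x (SOL X F)))) /\
  (* (iii) *)
  (forall alpha M, weakly_sharp X F alpha M ->
     forall x, X x -> forall g : R, Gap x X F = g%:E ->
       dist x (SOL X F) <= (alpha^-1 * g) `^ M^-1).
Proof.
(* Only closedness and convexity of SOL(X,F) are used: none of the hypotheses on H
   (Lipschitz continuity, monotonicity, continuity in (ii)) is needed. *)
move=> _ clX cvxX lipF monF _ _ [xb [solxb _]].
have solF0 : SOL X F !=set0 by exists xb.
have clS := SOL_closed clX cvxX lipF monF.
have cvxS := SOL_convex cvxX lipF monF.
split; [split|split].
- by move=> x _; exact: Gap_ge_Nsup_mul_dist.
- by move=> x; exact: Gap_ge0.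
- move=> f gradf _ cvxf; split.
    move=> xs x minxs _.
    have := argmin_growth gradf x (convex_fun_modulus0 cvxf) cvxS minxs.
    by rewrite mul0r; lra.
  move=> mu scvxf; have cvxf_mu := strongly_convex_modulus scvxf.
  split; last by move=> xs x minxs _; exact: argmin_growth.
  have mu2 : 0 < mu / 2 by rewrite divr_gt0 //; case: scvxf.
  exact: (argmin_exists gradf (SOL X F) clS solF0 mu2 cvxf_mu).
- by move=> alpha M sharpF x Xx g Gapx; exact: weakly_sharp_dist_le sharpF solF0 Xx Gapx.
Qed.
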